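(* Let $p=(p_1,p_2,p_3,p_4)$ be an ordered quadruple of distinct points of $\partial\mathbf H^2_{\mathbb C}$ and let $X_1=X(p_1,p_2,p_3,p_4)$, $X_2=X(p_1,p_3,p_2,p_4)$, $A=\mathbb A(p_1,p_2,p_3)$. Then all four points lie on a common $\mathbb R$-circle if and only if $A=0$ and $X_1,X_2$ are positive real numbers satisfying $$-2(X_1+X_2)-2X_1X_2+X_1^2+X_2^2+1=0.$$
   Context: $\mathbb C^{2,1}$ is $\mathbb C^3$ with Hermitian form $\langle Z,W\rangle=z_1\overline{w}_3+z_2\overline{w}_2+z_3\overline{w}_1$; $\mathbf H^2_{\mathbb C}$ and $\partial\mathbf H^2_{\mathbb C}$ are the negative and null lines in $\mathbb P\mathbb C^2$. An $\mathbb R$-circle is the intersection of $\partial\mathbf H^2_{\mathbb C}$ with the closure of a totally real totally geodesic 2-plane (a copy of $\mathbf H^2_{\mathbb R}$) in $\mathbf H^2_{\mathbb C}$. With null lifts $P_i$: $X(p_1,p_2,p_3,p_4)=\dfrac{\langle P_3,P_1\rangle\langle P_4,P_2\rangle}{\langle P_4,P_1\rangle\langle P_3,P_2\rangle}$ and $\mathbb A(p_1,p_2,p_3)=\arg\bigl(-\langle P_1,P_2\rangle\langle P_2,P_3\rangle\langle P_3,P_1\rangle\bigr)\in[-\pi/2,\pi/2]$. *)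

From Stdlib Require Import Reals.
From Coquelicot Require Import Coquelicot.
Open Scope R_scope.

Record vec := mkV { v1 : C; v2 : C; v3 : C }.

Definition vzero : vec := mkV 0%C 0%C 0%C.
Definition vadd (Z W : vec) : vec :=
  mkV (v1 Z + v1 W)%C (v2 Z + v2 W)%C (v3 Z + v3 W)%C.
Definition vscal (l : C) (Z : vec) : vec :=
  mkV (l * v1 Z)%C (l * v2 Z)%C (l * v3 Z)%C.

Definition herm (Z W : vec) : C :=
  (v1 Z * Cconj (v3 W) + v2 Z * Cconj (v2 W) + v3 Z * Cconj (v1 W))%C.

Definition null_vec (Z : vec) : Prop := Z <> vzero /\ herm Z Z = 0%C.

(** Lifts of the same point of P C^2. *)
Definition proj_eq (Z W : vec) : Prop := exists l : C, l <> 0%C /\ W = vscal l Z.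

(** Unitary transformations of C^{2,1}: C-linear maps preserving the form
    (these are automatically injective, hence in U(2,1)). *)
Definition unitary21 (g : vec -> vec) : Prop :=
  (forall Z W, g (vadd Z W) = vadd (g Z) (g W)) /\
  (forall l Z, g (vscal l Z) = vscal l (g Z)) /\
  (forall Z W, herm (g Z) (g W) = herm Z W).

Definition real_vec (x1 x2 x3 : R) : vec := mkV (RtoC x1) (RtoC x2) (RtoC x3).

(** The boundary of the closure of the copy g(H^2_R) of the real hyperbolic
    plane (H^2_R = projectivised negative vectors of R^3): the null lines
    spanned by g x, x a nonzero real null vector. *)
Definition Rcircle_of (g : vec -> vec) (P : vec) : Prop :=
  null_vec P /\
  exists x1 x2 x3 : R, real_vec x1 x2 x3 <> vzero /\
    herm (real_vec x1 x2 x3) (real_vec x1 x2 x3) = 0%C /\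
    proj_eq (g (real_vec x1 x2 x3)) P.

(** An R-circle: a set of (lifts of) boundary points which is the boundary
    of some copy g(H^2_R), g in U(2,1). *)
Definition is_Rcircle (S : vec -> Prop) : Prop :=
  exists g, unitary21 g /\ forall P, S P <-> Rcircle_of g P.

Definition crossX (P1 P2 P3 P4 : vec) : C :=
  ((herm P3 P1 * herm P4 P2) / (herm P4 P1 * herm P3 P2))%C.

(** Principal argument (atan2 convention, values in (-PI, PI]). *)
Definition carg (z : C) : R :=
  let a := Re z in let b := Im z in
  if Rlt_dec 0 a then atan (b / a)
  else if Rlt_dec a 0 then
    (if Rle_dec 0 b then atan (b / a) + PI else atan (b / a) - PI)
  else if Rlt_dec 0 b then PI / 2
  else if Rlt_dec b 0 then - (PI / 2)
  else 0.

Definition cartanA (P1 P2 P3 : vec) : R :=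
  carg (- (herm P1 P2 * herm P2 P3 * herm P3 P1))%C.

Definition pos_real (z : C) : Prop := Im z = 0 /\ 0 < Re z.

(* On an R-circle the four points are lifts l_i g(x_i) of real null vectors x_i of
   R^{2,1}, so every Hermitian product is l_i conj(l_j) times the real Lorentzian
   product r_ij.  The Gram determinant of three null vectors is 2 r12 r23 r31 = -det^2,
   which makes A vanish and both cross-ratios (ratios of the r_ij) positive, while the
   Gram determinant of four vectors of R^3 vanishes: this is the quadratic relation.
   Conversely, A = 0 lets one rescale lifts of p1, p2, p3 into a unitary frame in which
   they are g(1,0,0), g(0,0,1) and g(2,2,-1); in that frame p4 is a multiple of
   g(2 X1, X1 + 1 - X2, -1), a real vector which is null exactly by the relation. *)

From Stdlib Require Import Reals Lra.
From Coquelicot Require Import Coquelicot.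
Open Scope R_scope.

Lemma C_ext (a b : C) : Re a = Re b -> Im a = Im b -> a = b.
Proof. destruct a, b; simpl; intros; subst; reflexivity. Qed.

Lemma Cconj_RtoC (r : R) : Cconj (RtoC r) = RtoC r.
Proof. apply C_ext; simpl; lra. Qed.

Lemma RtoC_neq (a b : R) : a <> b -> RtoC a <> RtoC b.
Proof. intros H E. apply H. exact (f_equal Re E). Qed.

Lemma Cconj_neq_0 (z : C) : z <> RtoC 0 -> Cconj z <> RtoC 0.
Proof. intros H E. apply H. rewrite <- (Cconj_conj z), E, Cconj_RtoC. reflexivity. Qed.

Lemma Cconj_eq_0 (z : C) : Cconj z = RtoC 0 -> z = RtoC 0.
Proof. intros H. rewrite <- (Cconj_conj z), H, Cconj_RtoC. reflexivity. Qed.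

Lemma Cmult_eq_0_r (a b : C) : a <> RtoC 0 -> (a * b)%C = RtoC 0 -> b = RtoC 0.
Proof. intros Ha H. replace b with (/ a * (a * b))%C by (field; exact Ha). rewrite H. ring. Qed.

Lemma Cinv_neq_0 (z : C) : z <> RtoC 0 -> Cinv z <> RtoC 0.
Proof. intros H E. apply C1_nz. rewrite <- (Cinv_l z H), E. ring. Qed.

Lemma Cdiv_mult_neq_0 (a b c d : C) : (a * b / (c * d))%C <> RtoC 0 ->
  a <> RtoC 0 /\ b <> RtoC 0 /\ c <> RtoC 0 /\ d <> RtoC 0.
Proof.
  intros H.
  assert (Cinv0 : Cinv (RtoC 0) = RtoC 0) by (apply C_ext; simpl; unfold Rdiv; ring).
  unfold Cdiv in H.
  repeat split; intro E; apply H; rewrite E, ?Cmult_0_l, ?Cmult_0_r, ?Cinv0; ring.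
Qed.

Lemma RtoC_Re (z : C) : Im z = 0 -> RtoC (Re z) = z.
Proof. intros H. apply C_ext; simpl; [reflexivity | symmetry; exact H]. Qed.

Lemma carg_RtoC_pos (r : R) : 0 < r -> carg (RtoC r) = 0.
Proof.
  intros H. unfold carg. rewrite re_RtoC, im_RtoC.
  destruct (Rlt_dec 0 r); [|lra]. unfold Rdiv. rewrite Rmult_0_l. apply atan_0.
Qed.

Lemma carg_eq_0 (z : C) : z <> RtoC 0 -> carg z = 0 -> Im z = 0 /\ 0 < Re z.
Proof.
  unfold carg. intros Hz H. pose proof PI_RGT_0.
  destruct (Rlt_dec 0 (Re z)) as [Hre|Hre].
  - apply atan_eq0 in H. split; [|exact Hre].
    replace (Im z) with (Im z / Re z * Re z) by (field; lra). rewrite H. ring.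
  - pose proof (atan_bound (Im z / Re z)).
    destruct (Rlt_dec (Re z) 0); [destruct (Rle_dec 0 (Im z)); lra|].
    destruct (Rlt_dec 0 (Im z)); [lra|].
    destruct (Rlt_dec (Im z) 0); [lra|].
    exfalso. apply Hz. apply C_ext; simpl; lra.
Qed.

Lemma vec_ext (a b : vec) : v1 a = v1 b -> v2 a = v2 b -> v3 a = v3 b -> a = b.
Proof. destruct a, b; simpl; intros; subst; reflexivity. Qed.

Lemma herm_conj (Z W : vec) : Cconj (herm Z W) = herm W Z.
Proof. unfold herm. rewrite !Cplus_conj, !Cmult_conj, !Cconj_conj. ring. Qed.

Lemma herm_scal_l l Z W : herm (vscal l Z) W = (l * herm Z W)%C.
Proof. unfold herm, vscal; simpl. ring. Qed.

Lemma herm_scal_r l Z W : herm Z (vscal l W) = (Cconj l * herm Z W)%C.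
Proof. unfold herm, vscal; simpl. rewrite !Cmult_conj. ring. Qed.

Lemma herm_add_l Z Z' W : herm (vadd Z Z') W = (herm Z W + herm Z' W)%C.
Proof. unfold herm, vadd; simpl. ring. Qed.

Lemma herm_add_r Z W W' : herm Z (vadd W W') = (herm Z W + herm Z W')%C.
Proof. unfold herm, vadd; simpl. rewrite !Cplus_conj. ring. Qed.

(** * Real null vectors of R^{2,1} *)

Record rvec := mkR { r1 : R; r2 : R; r3 : R }.

Definition rzero : rvec := mkR 0 0 0.
Definition rscal (t : R) (x : rvec) : rvec := mkR (t * r1 x) (t * r2 x) (t * r3 x).
Definition rform (x y : rvec) : R := r1 x * r3 y + r2 x * r2 y + r3 x * r1 y.
Definition rnull (x : rvec) : Prop := rform x x = 0.
Definition embed (x : rvec) : vec := real_vec (r1 x) (r2 x) (r3 x).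

Lemma rform_sym x y : rform x y = rform y x.
Proof. unfold rform; ring. Qed.

Lemma herm_embed x y : herm (embed x) (embed y) = RtoC (rform x y).
Proof.
  unfold herm, embed, real_vec, rform; simpl.
  rewrite !Cconj_RtoC, !RtoC_plus, !RtoC_mult. reflexivity.
Qed.

Lemma embed_scal t x : embed (rscal t x) = vscal (RtoC t) (embed x).
Proof. apply vec_ext; simpl; apply RtoC_mult. Qed.

Lemma embed_neq_0 x : x <> rzero -> embed x <> vzero.
Proof.
  destruct x as [a b c]. intros Hx E. apply Hx.
  injection E. intros. subst. reflexivity.
Qed.

Lemma rnull_orth_collinear x y : rnull x -> rnull y -> x <> rzero ->
  rform x y = 0 -> exists t, y = rscal t x.
Proof.
  destruct x as [a1 a2 a3], y as [b1 b2 b3]; unfold rnull, rform, rscal; simpl.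
  intros Nx Ny Zx Oxy.
  destruct (Req_dec a1 0) as [Ha1|Ha1].
  - subst a1. assert (a2 = 0) by nra. subst a2.
    assert (Ha3 : a3 <> 0) by (intros ->; apply Zx; reflexivity).
    assert (b1 = 0) by (apply (Rmult_eq_reg_l a3); lra). subst b1.
    assert (b2 = 0) by nra. subst b2.
    exists (b3 / a3). f_equal; field; exact Ha3.
  - assert (E2 : a1 * b2 = a2 * b1).
    { assert (Hsq : (a1 * b2 - a2 * b1) * (a1 * b2 - a2 * b1) = 0).
      { replace ((a1 * b2 - a2 * b1) * (a1 * b2 - a2 * b1)) with
          (- 2 * a1 * b1 * (a1 * b3 + a2 * b2 + a3 * b1)
           + a1 * a1 * (b1 * b3 + b2 * b2 + b3 * b1)
           + b1 * b1 * (a1 * a3 + a2 * a2 + a3 * a1)) by ring.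
        rewrite Oxy, Nx, Ny. ring. }
      nra. }
    assert (E3 : a1 * b3 = a3 * b1).
    { apply (Rmult_eq_reg_l a1); [|exact Ha1].
      replace (a1 * (a1 * b3)) with
        (a1 * (a1 * b3 + a2 * b2 + a3 * b1) - a2 * (a1 * b2 - a2 * b1)
         - b1 * (a1 * a3 + a2 * a2 + a3 * a1) + a1 * (a3 * b1)) by ring.
      rewrite Oxy, Nx, E2. ring. }
    exists (b1 / a1). f_equal; apply (Rmult_eq_reg_l a1); try exact Ha1;
      [| rewrite E2 | rewrite E3]; field; exact Ha1.
Qed.

Definition det3 (a b c d e f g h i : R) : R :=
  a * (e * i - f * h) - b * (d * i - f * g) + c * (d * h - e * g).

Definition det4 (m11 m12 m13 m14 m21 m22 m23 m24 m31 m32 m33 m34 m41 m42 m43 m44 : R) : R :=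
  m11 * det3 m22 m23 m24 m32 m33 m34 m42 m43 m44
  - m12 * det3 m21 m23 m24 m31 m33 m34 m41 m43 m44
  + m13 * det3 m21 m22 m24 m31 m32 m34 m41 m42 m44
  - m14 * det3 m21 m22 m23 m31 m32 m33 m41 m42 m43.

(* [rform] has matrix of determinant -1. *)
Lemma rform_gram3 a b c :
  det3 (rform a a) (rform a b) (rform a c) (rform b a) (rform b b) (rform b c)
       (rform c a) (rform c b) (rform c c)
  = - (det3 (r1 a) (r2 a) (r3 a) (r1 b) (r2 b) (r3 b) (r1 c) (r2 c) (r3 c)) ^ 2.
Proof. unfold det3, rform; ring. Qed.

Lemma rform_gram4 a b c d :
  det4 (rform a a) (rform a b) (rform a c) (rform a d)
       (rform b a) (rform b b) (rform b c) (rform b d)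
       (rform c a) (rform c b) (rform c c) (rform c d)
       (rform d a) (rform d b) (rform d c) (rform d d) = 0.
Proof. unfold det4, det3, rform; ring. Qed.

Lemma rnull_triple_neg a b c : rnull a -> rnull b -> rnull c ->
  rform a b <> 0 -> rform b c <> 0 -> rform c a <> 0 ->
  rform a b * rform b c * rform c a < 0.
Proof.
  unfold rnull. intros Na Nb Nc Hab Hbc Hca.
  pose proof (rform_gram3 a b c) as G.
  rewrite Na, Nb, Nc, (rform_sym b a), (rform_sym a c), (rform_sym c b) in G.
  assert (Hprod : rform a b * rform b c * rform c a <> 0)
    by (repeat apply Rmult_integral_contrapositive_currified; assumption).
  assert (Hle : 2 * (rform a b * rform b c * rform c a) <= 0).
  { replace (2 * (rform a b * rform b c * rform c a))
      with (det3 0 (rform a b) (rform c a) (rform a b) 0 (rform b c) (rform c a) (rform b c) 0)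
      by (unfold det3; ring).
    rewrite G. pose proof (pow2_ge_0 (det3 (r1 a) (r2 a) (r3 a) (r1 b) (r2 b) (r3 b)
      (r1 c) (r2 c) (r3 c))). lra. }
  lra.
Qed.

Lemma ratio_pos_of_neg_products (a b c d e : R) :
  a * b * c < 0 -> a * d * e < 0 -> 0 < c * d / (e * b).
Proof.
  intros H1 H2.
  assert (Hbcde : 0 < (b * c) * (d * e)).
  { assert (P : 0 < (a * b * c) * (a * d * e)) by nra.
    replace ((a * b * c) * (a * d * e)) with ((a * a) * ((b * c) * (d * e))) in P by ring.
    destruct (Rle_or_lt ((b * c) * (d * e)) 0) as [Hle|Hlt]; [|exact Hlt].
    pose proof (Rle_0_sqr a). unfold Rsqr in *. nra. }
  assert (Heb : e * b <> 0).
  { intro E. replace ((b * c) * (d * e)) with ((e * b) * (c * d)) in Hbcde by ring.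
    rewrite E in Hbcde. lra. }
  replace (c * d / (e * b)) with ((b * c) * (d * e) / ((e * b) * (e * b)))
    by (field; split; intro E; apply Heb; rewrite E; ring).
  apply Rdiv_lt_0_compat; [exact Hbcde | apply Rsqr_pos_lt, Heb].
Qed.

Definition cross_rel (x1 x2 : R) : R :=
  - 2 * (x1 + x2) - 2 * x1 * x2 + x1 * x1 + x2 * x2 + 1.

Lemma rnull_cross_rel a b c d : rnull a -> rnull b -> rnull c -> rnull d ->
  rform a d <> 0 -> rform b c <> 0 ->
  cross_rel (rform a c * rform b d / (rform a d * rform b c))
            (rform a b * rform c d / (rform a d * rform b c)) = 0.
Proof.
  unfold rnull. intros Na Nb Nc Nd Had Hbc.
  pose proof (rform_gram4 a b c d) as G.
  rewrite Na, Nb, Nc, Nd, (rform_sym b a), (rform_sym c a), (rform_sym d a),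
    (rform_sym c b), (rform_sym d b), (rform_sym d c) in G.
  (* with a zero diagonal the Gram determinant is (r_ad r_bc)^2 times the relation *)
  apply (Rmult_eq_reg_r ((rform a d * rform b c) ^ 2)).
  - rewrite Rmult_0_l, <- G. unfold cross_rel, det4, det3. field. split; assumption.
  - apply pow_nonzero, Rmult_integral_contrapositive_currified; assumption.
Qed.

(** * Lifts of real null vectors *)

Definition lift (g : vec -> vec) (l : C) (x : rvec) : vec := vscal l (g (embed x)).

Lemma Rcircle_of_lift g P : Rcircle_of g P <->
  null_vec P /\ exists l x, l <> RtoC 0 /\ x <> rzero /\ rnull x /\ P = lift g l x.
Proof.
  split.
  - intros (NP & x1 & x2 & x3 & Hx & Nx & l & Hl & E). split; [exact NP|].
    exists l, (mkR x1 x2 x3). repeat split; try assumption.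
    + intros E0. injection E0. intros. subst. apply Hx. reflexivity.
    + change (herm (embed (mkR x1 x2 x3)) (embed (mkR x1 x2 x3)) = RtoC 0) in Nx.
      rewrite herm_embed in Nx. exact (f_equal Re Nx).
  - intros (NP & l & [x1 x2 x3] & Hl & Hx & Nx & E). split; [exact NP|].
    exists x1, x2, x3. repeat split.
    + exact (embed_neq_0 _ Hx).
    + change (herm (embed (mkR x1 x2 x3)) (embed (mkR x1 x2 x3)) = RtoC 0).
      rewrite herm_embed. f_equal. exact Nx.
    + exists l. split; assumption.
Qed.

Section Lifts.

Variable g : vec -> vec.
Hypothesis Hg : unitary21 g.

Lemma herm_lift l m x y : herm (lift g l x) (lift g m y) = (l * Cconj m * RtoC (rform x y))%C.
Proof.
  destruct Hg as (_ & _ & Hherm).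
  unfold lift. rewrite herm_scal_l, herm_scal_r, Hherm, herm_embed. ring.
Qed.

Lemma lift_rform_neq_0 l m x y : l <> RtoC 0 -> m <> RtoC 0 ->
  rnull x -> rnull y -> x <> rzero -> y <> rzero ->
  ~ proj_eq (lift g l x) (lift g m y) -> rform x y <> 0.
Proof.
  intros Hl Hm Nx Ny Zx Zy Hneq Oxy.
  destruct (rnull_orth_collinear x y Nx Ny Zx Oxy) as [t ->].
  assert (Ht : t <> 0) by (intros ->; apply Zy; unfold rscal, rzero; f_equal; ring).
  apply Hneq. exists (m * RtoC t / l)%C. split.
  - apply Cmult_neq_0; [apply Cmult_neq_0; [exact Hm | apply RtoC_neq, Ht] | apply Cinv_neq_0, Hl].
  - destruct Hg as (_ & Hscal & _).
    unfold lift. rewrite embed_scal, Hscal.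
    apply vec_ext; unfold vscal; simpl; field; exact Hl.
Qed.

Lemma crossX_lift la lb lc ld a b c d :
  la <> RtoC 0 -> lb <> RtoC 0 -> lc <> RtoC 0 -> ld <> RtoC 0 ->
  rform a d <> 0 -> rform b c <> 0 ->
  crossX (lift g la a) (lift g lb b) (lift g lc c) (lift g ld d) =
  RtoC (rform a c * rform b d / (rform a d * rform b c)).
Proof.
  intros Ha Hb Hc Hd Had Hbc.
  unfold crossX. rewrite !herm_lift, (rform_sym c a), (rform_sym d b), (rform_sym d a),
    (rform_sym c b), RtoC_div, !RtoC_mult by (apply Rmult_integral_contrapositive_currified; assumption).
  field. repeat split; try apply Cconj_neq_0; try apply RtoC_neq; assumption.
Qed.

Lemma cartanA_lift la lb lc a b c :
  la <> RtoC 0 -> lb <> RtoC 0 -> lc <> RtoC 0 ->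
  rform a b * rform b c * rform c a < 0 ->
  cartanA (lift g la a) (lift g lb b) (lift g lc c) = 0.
Proof.
  intros Ha Hb Hc Hneg. unfold cartanA. rewrite !herm_lift.
  replace (- (la * Cconj lb * RtoC (rform a b) * (lb * Cconj lc * RtoC (rform b c))
             * (lc * Cconj la * RtoC (rform c a))))%C
    with (RtoC (- (Cmod la ^ 2 * Cmod lb ^ 2 * Cmod lc ^ 2
                   * (rform a b * rform b c * rform c a))))
    by (rewrite RtoC_opp, !RtoC_mult, !Cmod2_conj; ring).
  apply carg_RtoC_pos.
  apply Cmod_gt_0 in Ha, Hb, Hc.
  assert (0 < Cmod la ^ 2 * Cmod lb ^ 2 * Cmod lc ^ 2)
    by (apply Rmult_lt_0_compat; [apply Rmult_lt_0_compat|]; apply pow_lt; assumption).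
  nra.
Qed.

End Lifts.

Definition cross_relC (X1 X2 : C) : C :=
  ((- RtoC 2) * (X1 + X2) - RtoC 2 * X1 * X2 + X1 * X1 + X2 * X2 + RtoC 1)%C.

Lemma cross_relC_RtoC x1 x2 : cross_relC (RtoC x1) (RtoC x2) = RtoC (cross_rel x1 x2).
Proof. unfold cross_relC, cross_rel. rewrite !RtoC_plus, !RtoC_minus, !RtoC_mult, !RtoC_plus. ring. Qed.

Definition cross_invariants (P1 P2 P3 P4 : vec) : Prop :=
  cartanA P1 P2 P3 = 0 /\
  pos_real (crossX P1 P2 P3 P4) /\ pos_real (crossX P1 P3 P2 P4) /\
  cross_relC (crossX P1 P2 P3 P4) (crossX P1 P3 P2 P4) = RtoC 0.

Lemma lifts_cross_invariants g la lb lc ld a b c d : unitary21 g ->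
  la <> RtoC 0 -> lb <> RtoC 0 -> lc <> RtoC 0 -> ld <> RtoC 0 ->
  rnull a -> rnull b -> rnull c -> rnull d ->
  rform a b <> 0 -> rform a c <> 0 -> rform a d <> 0 ->
  rform b c <> 0 -> rform b d <> 0 -> rform c d <> 0 ->
  cross_invariants (lift g la a) (lift g lb b) (lift g lc c) (lift g ld d).
Proof.
  intros Hg Ha Hb Hc Hd Na Nb Nc Nd Hab Hac Had Hbc Hbd Hcd.
  assert (Hca := Hac); assert (Hda := Had); assert (Hcb := Hbc).
  rewrite rform_sym in Hca, Hda, Hcb.
  pose proof (rnull_triple_neg a b c Na Nb Nc Hab Hbc Hca) as Tabc.
  pose proof (rnull_triple_neg a b d Na Nb Nd Hab Hbd Hda) as Tabd.
  pose proof (rnull_triple_neg a c d Na Nc Nd Hac Hcd Hda) as Tacd.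
  rewrite (rform_sym c a) in Tabc. rewrite (rform_sym d a) in Tabd, Tacd.
  unfold cross_invariants.
  rewrite (crossX_lift g Hg la lb lc ld a b c d), (crossX_lift g Hg la lc lb ld a c b d),
    (rform_sym c b) by assumption.
  split; [|split; [|split]].
  - apply (cartanA_lift g Hg); try assumption. rewrite (rform_sym c a). exact Tabc.
  - split; [apply im_RtoC|]. rewrite re_RtoC.
    exact (ratio_pos_of_neg_products _ _ _ _ _ Tabc Tabd).
  - split; [apply im_RtoC|]. rewrite re_RtoC.
    apply (ratio_pos_of_neg_products (rform a c) (rform b c)); [lra | exact Tacd].
  - rewrite cross_relC_RtoC, (rnull_cross_rel a b c d) by assumption. reflexivity.
Qed.

Lemma Rcircle_cross_invariants g P1 P2 P3 P4 : unitary21 g ->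
  Rcircle_of g P1 -> Rcircle_of g P2 -> Rcircle_of g P3 -> Rcircle_of g P4 ->
  ~ proj_eq P1 P2 -> ~ proj_eq P1 P3 -> ~ proj_eq P1 P4 ->
  ~ proj_eq P2 P3 -> ~ proj_eq P2 P4 -> ~ proj_eq P3 P4 ->
  cross_invariants P1 P2 P3 P4.
Proof.
  intros Hg C1 C2 C3 C4 H12 H13 H14 H23 H24 H34.
  apply Rcircle_of_lift in C1, C2, C3, C4.
  destruct C1 as (_ & la & a & Ha & Za & Na & ->), C2 as (_ & lb & b & Hb & Zb & Nb & ->),
    C3 as (_ & lc & c & Hc & Zc & Nc & ->), C4 as (_ & ld & d & Hd & Zd & Nd & ->).
  apply lifts_cross_invariants; try assumption.
  - apply (lift_rform_neq_0 g Hg la lb); assumption.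
  - apply (lift_rform_neq_0 g Hg la lc); assumption.
  - apply (lift_rform_neq_0 g Hg la ld); assumption.
  - apply (lift_rform_neq_0 g Hg lb lc); assumption.
  - apply (lift_rform_neq_0 g Hg lb ld); assumption.
  - apply (lift_rform_neq_0 g Hg lc ld); assumption.
Qed.

(** * Unitary frames *)

Definition frame_map (C1 C2 C3 Z : vec) : vec :=
  mkV (v1 Z * v1 C1 + v2 Z * v1 C2 + v3 Z * v1 C3)%C
      (v1 Z * v2 C1 + v2 Z * v2 C2 + v3 Z * v2 C3)%C
      (v1 Z * v3 C1 + v2 Z * v3 C2 + v3 Z * v3 C3)%C.

(* [frame_map C1 C2 C3] sends the standard basis to (C1, C2, C3); a frame has the Gram
   matrix of [herm]. *)
Definition frame (C1 C2 C3 : vec) : Prop :=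
  herm C1 C1 = RtoC 0 /\ herm C1 C2 = RtoC 0 /\ herm C1 C3 = RtoC 1 /\
  herm C2 C2 = RtoC 1 /\ herm C2 C3 = RtoC 0 /\ herm C3 C3 = RtoC 0.

Lemma herm_frame_map_l C1 C2 C3 Z W :
  herm (frame_map C1 C2 C3 Z) W = (v1 Z * herm C1 W + v2 Z * herm C2 W + v3 Z * herm C3 W)%C.
Proof. unfold herm, frame_map; simpl. ring. Qed.

Lemma herm_frame_map C1 C2 C3 Z W :
  herm (frame_map C1 C2 C3 Z) (frame_map C1 C2 C3 W) =
  (v1 Z * Cconj (v1 W) * herm C1 C1 + v1 Z * Cconj (v2 W) * herm C1 C2
   + v1 Z * Cconj (v3 W) * herm C1 C3 + v2 Z * Cconj (v1 W) * herm C2 C1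
   + v2 Z * Cconj (v2 W) * herm C2 C2 + v2 Z * Cconj (v3 W) * herm C2 C3
   + v3 Z * Cconj (v1 W) * herm C3 C1 + v3 Z * Cconj (v2 W) * herm C3 C2
   + v3 Z * Cconj (v3 W) * herm C3 C3)%C.
Proof. unfold herm, frame_map; simpl. rewrite !Cplus_conj, !Cmult_conj. ring. Qed.

Lemma frame_map_unitary C1 C2 C3 : frame C1 C2 C3 -> unitary21 (frame_map C1 C2 C3).
Proof.
  intros (H11 & H12 & H13 & H22 & H23 & H33).
  assert (H21 : herm C2 C1 = RtoC 0) by (rewrite <- herm_conj, H12, Cconj_RtoC; reflexivity).
  assert (H31 : herm C3 C1 = RtoC 1) by (rewrite <- herm_conj, H13, Cconj_RtoC; reflexivity).
  assert (H32 : herm C3 C2 = RtoC 0) by (rewrite <- herm_conj, H23, Cconj_RtoC; reflexivity).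
  split; [|split].
  - intros Z W; apply vec_ext; unfold frame_map, vadd; simpl; ring.
  - intros l Z; apply vec_ext; unfold frame_map, vscal; simpl; ring.
  - intros Z W. rewrite herm_frame_map, H11, H12, H13, H21, H22, H23, H31, H32, H33.
    unfold herm. ring.
Qed.

Definition det3C (a b c d e f g h i : C) : C :=
  (a * (e * i - f * h) - b * (d * i - f * g) + c * (d * h - e * g))%C.

Lemma cramer3_homogeneous (a b c d e f g h i x y z : C) :
  det3C a b c d e f g h i <> RtoC 0 ->
  (a * x + b * y + c * z = RtoC 0)%C -> (d * x + e * y + f * z = RtoC 0)%C ->
  (g * x + h * y + i * z = RtoC 0)%C ->
  x = RtoC 0 /\ y = RtoC 0 /\ z = RtoC 0.
Proof.
  intros HD E1 E2 E3. repeat split; apply (Cmult_eq_0_r _ _ HD).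
  - replace (det3C a b c d e f g h i * x)%C with
      ((e * i - f * h) * (a * x + b * y + c * z) - (b * i - c * h) * (d * x + e * y + f * z)
       + (b * f - c * e) * (g * x + h * y + i * z))%C by (unfold det3C; ring).
    rewrite E1, E2, E3. ring.
  - replace (det3C a b c d e f g h i * y)%C with
      (- (d * i - f * g) * (a * x + b * y + c * z) + (a * i - c * g) * (d * x + e * y + f * z)
       - (a * f - c * d) * (g * x + h * y + i * z))%C by (unfold det3C; ring).
    rewrite E1, E2, E3. ring.
  - replace (det3C a b c d e f g h i * z)%C with
      ((d * h - e * g) * (a * x + b * y + c * z) - (a * h - b * g) * (d * x + e * y + f * z)
       + (a * e - b * d) * (g * x + h * y + i * z))%C by (unfold det3C; ring).
    rewrite E1, E2, E3. ring.
Qed.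

Lemma herm_gram_det (C1 C2 C3 : vec) :
  det3C (herm C1 C1) (herm C1 C2) (herm C1 C3) (herm C2 C1) (herm C2 C2) (herm C2 C3)
        (herm C3 C1) (herm C3 C2) (herm C3 C3) =
  (- (det3C (v1 C1) (v2 C1) (v3 C1) (v1 C2) (v2 C2) (v3 C2) (v1 C3) (v2 C3) (v3 C3)
      * Cconj (det3C (v1 C1) (v2 C1) (v3 C1) (v1 C2) (v2 C2) (v3 C2)
                     (v1 C3) (v2 C3) (v3 C3))))%C.
Proof.
  unfold det3C, herm. repeat rewrite ?Cplus_conj, ?Cminus_conj, ?Cmult_conj.
  generalize (v1 C1) (v2 C1) (v3 C1) (v1 C2) (v2 C2) (v3 C2) (v1 C3) (v2 C3) (v3 C3).
  intros. ring.
Qed.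

Lemma frame_det_neq_0 C1 C2 C3 : frame C1 C2 C3 ->
  det3C (v1 C1) (v2 C1) (v3 C1) (v1 C2) (v2 C2) (v3 C2) (v1 C3) (v2 C3) (v3 C3) <> RtoC 0.
Proof.
  intros (H11 & H12 & H13 & H22 & H23 & H33) E.
  pose proof (herm_gram_det C1 C2 C3) as G.
  rewrite <- (herm_conj C1 C2), <- (herm_conj C1 C3), <- (herm_conj C2 C3),
    H11, H12, H13, H22, H23, H33, E, !Cconj_RtoC in G.
  apply C1_nz.
  transitivity (- det3C (RtoC 0) (RtoC 0) (RtoC 1) (RtoC 0) (RtoC 1) (RtoC 0)
                        (RtoC 1) (RtoC 0) (RtoC 0))%C; [unfold det3C; ring|].
  rewrite G. ring.
Qed.

Lemma frame_orth_eq_0 C1 C2 C3 w : frame C1 C2 C3 ->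
  herm w C1 = RtoC 0 -> herm w C2 = RtoC 0 -> herm w C3 = RtoC 0 -> w = vzero.
Proof.
  intros Hf E1 E2 E3.
  rewrite <- herm_conj in E1, E2, E3. apply Cconj_eq_0 in E1, E2, E3.
  destruct (cramer3_homogeneous _ _ _ _ _ _ _ _ _ _ _ _ (frame_det_neq_0 C1 C2 C3 Hf) E1 E2 E3)
    as (X3 & X2 & X1).
  apply vec_ext; apply Cconj_eq_0; assumption.
Qed.

Lemma frame_decomp C1 C2 C3 v : frame C1 C2 C3 ->
  v = frame_map C1 C2 C3 (mkV (herm v C3) (herm v C2) (herm v C1)).
Proof.
  intros Hf. remember (frame_map C1 C2 C3 _) as u eqn:Eu.
  assert (Hu : forall C, herm (vadd v (vscal (RtoC (-1)) u)) C = (herm v C - herm u C)%C)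
    by (intros C; rewrite herm_add_l, herm_scal_l; ring).
  pose proof Hf as (H11 & H12 & H13 & H22 & H23 & H33).
  assert (Hw : vadd v (vscal (RtoC (-1)) u) = vzero).
  { apply (frame_orth_eq_0 C1 C2 C3); [exact Hf| | |]; rewrite Hu, Eu, herm_frame_map_l; simpl.
    - rewrite <- (herm_conj C1 C2), <- (herm_conj C1 C3), H11, H12, H13, !Cconj_RtoC. ring.
    - rewrite <- (herm_conj C2 C3), H12, H22, H23, Cconj_RtoC. ring.
    - rewrite H13, H23, H33. ring. }
  apply vec_ext; [apply (f_equal v1) in Hw | apply (f_equal v2) in Hw | apply (f_equal v3) in Hw];
    simpl in Hw; match goal with |- ?a = ?b =>
      replace a with ((a + RtoC (-1) * b) + b)%C by ring end; rewrite Hw; ring.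
Qed.

(** * The frame of three boundary points *)

Lemma cartanA_eq_0_normalize P1 P2 P3 :
  herm P1 P2 <> RtoC 0 -> herm P2 P3 <> RtoC 0 -> herm P3 P1 <> RtoC 0 ->
  cartanA P1 P2 P3 = 0 ->
  exists b, b <> 0 /\
    (RtoC 2 * herm P3 P1 = - (RtoC b * RtoC b * herm P2 P1 * herm P3 P2))%C.
Proof.
  intros H12 H23 H31 HA.
  set (z := (- (herm P1 P2 * herm P2 P3 * herm P3 P1))%C).
  assert (Hz : z <> RtoC 0).
  { intros E. apply (Cmult_neq_0 _ _ (Cmult_neq_0 _ _ H12 H23) H31).
    replace (herm P1 P2 * herm P2 P3 * herm P3 P1)%C with (- z)%C by (unfold z; ring).
    rewrite E. ring. }
  destruct (carg_eq_0 z Hz HA) as [Iz Rz].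
  pose proof (proj1 (Cmod_gt_0 _) H12) as M12. pose proof (proj1 (Cmod_gt_0 _) H23) as M23.
  set (s := 2 * Re z / (Cmod (herm P1 P2) ^ 2 * Cmod (herm P2 P3) ^ 2)).
  assert (Hs : 0 < s).
  { apply Rdiv_lt_0_compat; [lra|]. apply Rmult_lt_0_compat; apply pow_lt; assumption. }
  exists (sqrt s). split; [apply Rgt_not_eq, sqrt_lt_R0, Hs|].
  rewrite <- RtoC_mult, sqrt_sqrt by lra. unfold s.
  rewrite RtoC_div, !RtoC_mult, !Cmod2_conj, !herm_conj.
  2: { apply Rmult_integral_contrapositive_currified; apply pow_nonzero; lra. }
  rewrite (RtoC_Re z Iz).
  unfold z. field. repeat split; try assumption; rewrite <- herm_conj; apply Cconj_neq_0; assumption.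
Qed.

Section TripleFrame.

Variables (P1 P2 P3 : vec) (b : R).
Hypotheses (N1 : herm P1 P1 = RtoC 0) (N2 : herm P2 P2 = RtoC 0) (N3 : herm P3 P3 = RtoC 0).
Hypotheses (Hb : b <> 0) (H12 : herm P1 P2 <> RtoC 0) (H32 : herm P3 P2 <> RtoC 0).
Hypothesis Hnorm : (RtoC 2 * herm P3 P1 = - (RtoC b * RtoC b * herm P2 P1 * herm P3 P2))%C.

(* [triple_frame1] and [triple_frame3] rescale P1 and P2 so that their product is 1, and
   [triple_frame2] is their unit normal in the span of P1, P2, P3: [Hnorm] is the condition
   making it orthogonal to P1 and of norm 1. *)
Definition triple_frame1 : vec := vscal (/ (RtoC b * herm P1 P2)) P1.
Definition triple_frame2 : vec :=
  vadd (vadd (vscal (/ (RtoC b * herm P3 P2)) P3) (vscal (- / (RtoC b * herm P1 P2)) P1))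
       (vscal (RtoC (b / 2)) P2).
Definition triple_frame3 : vec := vscal (RtoC b) P2.

Let g := frame_map triple_frame1 triple_frame2 triple_frame3.

Let H21 : herm P2 P1 <> RtoC 0.
Proof. rewrite <- herm_conj. apply Cconj_neq_0, H12. Qed.
Let H23 : herm P2 P3 <> RtoC 0.
Proof. rewrite <- herm_conj. apply Cconj_neq_0, H32. Qed.
Let Hb' : RtoC b <> RtoC 0.
Proof. apply RtoC_neq, Hb. Qed.
Let H2 : RtoC 2 <> RtoC 0.
Proof. apply RtoC_neq. lra. Qed.
Let Hb2 : RtoC (b / 2) = (RtoC b / RtoC 2)%C.
Proof. apply RtoC_div. lra. Qed.
Let H31 : herm P3 P1 = (- (RtoC b * RtoC b * herm P2 P1 * herm P3 P2) / RtoC 2)%C.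
Proof. rewrite <- Hnorm. field. Qed.
Let H13 : herm P1 P3 = (- (RtoC b * RtoC b * herm P1 P2 * herm P2 P3) / RtoC 2)%C.
Proof.
  rewrite <- herm_conj, H31, Cdiv_conj, Copp_conj, !Cmult_conj, !Cconj_RtoC, !herm_conj
    by exact H2.
  reflexivity.
Qed.
Let Hconj_inv (P Q : vec) : herm P Q <> RtoC 0 ->
  Cconj (/ (RtoC b * herm P Q)) = (/ (RtoC b * herm Q P))%C.
Proof.
  intros H. rewrite Cinv_conj, Cmult_conj, Cconj_RtoC, herm_conj by (apply Cmult_neq_0; assumption).
  reflexivity.
Qed.

Ltac herm_expand := repeat rewrite ?herm_add_l, ?herm_add_r, ?herm_scal_l, ?herm_scal_r.

Lemma triple_frame_spec : frame triple_frame1 triple_frame2 triple_frame3.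
Proof.
  unfold frame, triple_frame1, triple_frame2, triple_frame3. herm_expand.
  rewrite ?Copp_conj, ?Cconj_RtoC, ?(Hconj_inv P1 P2 H12), ?(Hconj_inv P3 P2 H32),
    ?N1, ?N2, ?N3, ?H31, ?H13, ?Hb2.
  repeat split; field; repeat split; assumption.
Qed.

Ltac frame_coords :=
  unfold lift, embed, g, frame_map, triple_frame1, triple_frame2, triple_frame3;
  apply vec_ext; cbn [vscal vadd real_vec v1 v2 v3 r1 r2 r3]; rewrite ?Hb2;
  field; repeat split; assumption.

Lemma triple_frame_P1 : P1 = lift g (RtoC b * herm P1 P2) (mkR 1 0 0).
Proof. frame_coords. Qed.

Lemma triple_frame_P2 : P2 = lift g (/ RtoC b) (mkR 0 0 1).
Proof. frame_coords. Qed.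

Lemma triple_frame_P3 : P3 = lift g (RtoC b * herm P3 P2 / RtoC 2) (mkR 2 2 (-1)).
Proof. frame_coords. Qed.

Lemma triple_frame_P4 P4 x1 x2 : herm P4 P1 <> RtoC 0 -> herm P4 P2 <> RtoC 0 -> x1 <> 0 ->
  RtoC x1 = crossX P1 P2 P3 P4 -> RtoC x2 = crossX P1 P3 P2 P4 ->
  P4 = lift g (RtoC b * herm P4 P2 / (RtoC 2 * RtoC x1)) (mkR (2 * x1) (x1 + 1 - x2) (-1)).
Proof.
  intros H41 H42 Hx1 HX1 HX2.
  assert (Hx1' : RtoC x1 <> RtoC 0) by (apply RtoC_neq, Hx1).
  destruct (frame_map_unitary _ _ _ triple_frame_spec) as (_ & Hscal & _).
  unfold lift, g. rewrite <- Hscal, (frame_decomp _ _ _ P4 triple_frame_spec) at 1.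
  f_equal. unfold triple_frame1, triple_frame2, triple_frame3. herm_expand.
  rewrite ?Copp_conj, ?Cconj_RtoC, ?(Hconj_inv P1 P2 H12), ?(Hconj_inv P3 P2 H32).
  apply vec_ext; unfold embed; cbn [vscal real_vec v1 v2 v3 r1 r2 r3];
    repeat rewrite ?RtoC_mult, ?RtoC_plus, ?RtoC_minus, ?RtoC_opp;
    rewrite ?Hb2, ?HX1, ?HX2; unfold crossX; rewrite ?H31;
    field; repeat split; assumption.
Qed.

End TripleFrame.

Lemma cross_invariants_Rcircle P1 P2 P3 P4 :
  null_vec P1 -> null_vec P2 -> null_vec P3 -> null_vec P4 ->
  cross_invariants P1 P2 P3 P4 ->
  exists g, unitary21 g /\ Rcircle_of g P1 /\ Rcircle_of g P2 /\ Rcircle_of g P3 /\ Rcircle_of g P4.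
Proof.
  intros N1 N2 N3 N4 (HA & [I1 Re1] & [I2 Re2] & Hrel).
  assert (HX1 := RtoC_Re _ I1); assert (HX2 := RtoC_Re _ I2).
  set (x1 := Re (crossX P1 P2 P3 P4)) in *; set (x2 := Re (crossX P1 P3 P2 P4)) in *.
  assert (Hrel' : cross_rel x1 x2 = 0).
  { rewrite <- HX1, <- HX2, cross_relC_RtoC in Hrel. exact (f_equal Re Hrel). }
  assert (X1nz : crossX P1 P2 P3 P4 <> RtoC 0) by (rewrite <- HX1; apply RtoC_neq; lra).
  assert (X2nz : crossX P1 P3 P2 P4 <> RtoC 0) by (rewrite <- HX2; apply RtoC_neq; lra).
  destruct (Cdiv_mult_neq_0 _ _ _ _ X1nz) as (H31 & H42 & H41 & H32).
  destruct (Cdiv_mult_neq_0 _ _ _ _ X2nz) as (H21 & _ & _ & H23).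
  assert (H12 : herm P1 P2 <> RtoC 0) by (rewrite <- herm_conj; apply Cconj_neq_0, H21).
  destruct (cartanA_eq_0_normalize P1 P2 P3 H12 H23 H31 HA) as (b & Hb & Hnorm).
  destruct N1 as [Z1 N1], N2 as [Z2 N2], N3 as [Z3 N3], N4 as [Z4 N4].
  assert (Hb' : RtoC b <> RtoC 0) by (apply RtoC_neq, Hb).
  assert (H2 : RtoC 2 <> RtoC 0) by (apply RtoC_neq; lra).
  exists (frame_map (triple_frame1 P1 P2 b) (triple_frame2 P1 P2 P3 b) (triple_frame3 P2 b)).
  split; [apply frame_map_unitary, triple_frame_spec; assumption|].
  split; [|split; [|split]]; apply Rcircle_of_lift; (split; [split; assumption|]).
  - exists (RtoC b * herm P1 P2)%C, (mkR 1 0 0).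
    split; [apply Cmult_neq_0; assumption|].
    split; [intros E; injection E; intros; lra|]. split; [unfold rnull, rform; simpl; ring|].
    apply triple_frame_P1; assumption.
  - exists (/ RtoC b)%C, (mkR 0 0 1).
    split; [apply Cinv_neq_0; assumption|].
    split; [intros E; injection E; intros; lra|]. split; [unfold rnull, rform; simpl; ring|].
    apply triple_frame_P2; assumption.
  - exists (RtoC b * herm P3 P2 / RtoC 2)%C, (mkR 2 2 (-1)).
    split; [apply Cmult_neq_0; [apply Cmult_neq_0 | apply Cinv_neq_0]; assumption|].
    split; [intros E; injection E; intros; lra|]. split; [unfold rnull, rform; simpl; ring|].
    apply triple_frame_P3; assumption.
  - exists (RtoC b * herm P4 P2 / (RtoC 2 * RtoC x1))%C, (mkR (2 * x1) (x1 + 1 - x2) (-1)).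
    split.
    { apply Cmult_neq_0; [apply Cmult_neq_0 | apply Cinv_neq_0, Cmult_neq_0, RtoC_neq];
        try assumption; lra. }
    split; [intros E; injection E; intros; lra|].
    split; [unfold rnull, rform; simpl; rewrite <- Hrel'; unfold cross_rel; ring|].
    apply triple_frame_P4; try assumption; lra.
Qed.

Theorem theorem3p3 (P1 P2 P3 P4 : vec) :
  null_vec P1 -> null_vec P2 -> null_vec P3 -> null_vec P4 ->
  ~ proj_eq P1 P2 -> ~ proj_eq P1 P3 -> ~ proj_eq P1 P4 ->
  ~ proj_eq P2 P3 -> ~ proj_eq P2 P4 -> ~ proj_eq P3 P4 ->
  ((exists S : vec -> Prop, is_Rcircle S /\ S P1 /\ S P2 /\ S P3 /\ S P4) <->
   (cartanA P1 P2 P3 = 0%R /\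
    pos_real (crossX P1 P2 P3 P4) /\ pos_real (crossX P1 P3 P2 P4) /\
    ((- RtoC 2) * (crossX P1 P2 P3 P4 + crossX P1 P3 P2 P4)
     - RtoC 2 * crossX P1 P2 P3 P4 * crossX P1 P3 P2 P4
     + crossX P1 P2 P3 P4 * crossX P1 P2 P3 P4
     + crossX P1 P3 P2 P4 * crossX P1 P3 P2 P4 + RtoC 1 = RtoC 0)%C)).
Proof.
  intros N1 N2 N3 N4 H12 H13 H14 H23 H24 H34.
  split.
  - intros (S & (g & Hg & HS) & S1 & S2 & S3 & S4).
    apply HS in S1, S2, S3, S4.
    exact (Rcircle_cross_invariants g P1 P2 P3 P4 Hg S1 S2 S3 S4 H12 H13 H14 H23 H24 H34).
  - intros Hinv.
    destruct (cross_invariants_Rcircle P1 P2 P3 P4 N1 N2 N3 N4 Hinv)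
      as (g & Hg & C1 & C2 & C3 & C4).
    exists (Rcircle_of g). split; [exists g; split; [exact Hg | intros P; reflexivity] | tauto].
Qed.
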